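(* Consider a finite MDP with states $\mathcal{X}=\{1,\dots,n\}$, finite action set $\mathcal{A}$, costs $c(i,a)$, discount factor $\vartheta\in(0,1)$, a policy $\pi:\mathcal{X}\to\mathcal{A}$, uncertainty sets $\mathcal{P}^a_i$ and proxy uncertainty sets $\widehat{\mathcal{P}^a_i}$, an exploration transition matrix $P^{\widehat{\pi}}$ with stationary distribution $\xi$, and a feature matrix $\Phi\in\mathbb{R}^{n\times d}$, all as in the context. Suppose there is $\alpha\in(0,1)$ such that $\vartheta p_j\le\alpha P^{\widehat{\pi}}_{ij}$ for all $i,j\in\mathcal{X}$, $a\in\mathcal{A}$ and $p\in\mathcal{P}^a_i$. Let $\beta^a_i:=\max_{y\in\widehat{U^a_i}}\min_{x\in U^a_i}\|y-x\|_\xi/\xi_{\min}$ and $\beta:=\max_{i\in\mathcal{X}}\beta^{\pi(i)}_i$. If $\alpha^2+\vartheta^2\beta^2<\tfrac12$, then for all $\theta,\theta'\in\mathbb{R}^d$, \[ \|\widehat{T}_\pi(\Phi\theta)-\widehat{T}_\pi(\Phi\theta')\|_\xi^2\le 2(\alpha^2+\vartheta^2\beta^2)\|\Phi\theta-\Phi\theta'\|_\xi^2, \] which is $<\|\Phi\theta-\Phi\theta'\|_\xi^2$ whenever $\Phi\theta\neq\Phi\theta'$. If moreover $\beta^{\pi(i)}_i=0$ for all $i$ (so $\widehat{U^{\pi(i)}_i}=U^{\pi(i)}_i$), then for all $\theta,\theta'\in\mathbb{R}^d$, $\|\widehat{T}_\pi(\Phi\theta)-\widehat{T}_\pi(\P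hi\theta')\|_\xi\le\alpha\|\Phi\theta-\Phi\theta'\|_\xi$.
   Context: For each $i\in\mathcal{X},a\in\mathcal{A}$: $p^a_i\in\Delta_n$ is the (unknown) nominal transition probability vector; $U^a_i\subseteq\mathbb{R}^n$ is a nonempty compact confidence region with $\mathcal{P}^a_i:=\{p^a_i+x\mid x\in U^a_i\}\subseteq\Delta_n$; $\widehat{U^a_i}\supseteq U^a_i$ is a nonempty compact proxy region and $\widehat{\mathcal{P}^a_i}:=\{p^a_i+y\mid y\in\widehat{U^a_i}\}$. $\sigma_S(v):=\sup_{s\in S}s^\top v$. The proxy robust Bellman operator is $(\widehat{T}_\pi v)(i):=c(i,\pi(i))+\vartheta\,\sigma_{\widehat{\mathcal{P}^{\pi(i)}_i}}(v)$ for $v\in\mathbb{R}^n$. $P^{\widehat{\pi}}$ is the $n\times n$ transition probability matrix of the exploration policy used to generate samples, $\xi$ is its steady-state distribution, assumed to have all entries positive, $\xi_{\min}:=\min_i\xi_i$, and $\|x\|_\xi:=(\sum_i\xi_ix_i^2)^{1/2}$. *)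

From HB Require Import structures.
From mathcomp Require Import all_boot all_order all_algebra.
From mathcomp Require Import all_classical all_reals all_analysis.
Set Implicit Arguments. Unset Strict Implicit. Unset Printing Implicit Defensive.
Import Order.TTheory GRing.Theory Num.Theory.
Import numFieldNormedType.Exports.
Local Open Scope classical_set_scope.
Local Open Scope ring_scope.

Section Defs.
Variables (R : realType) (n : nat).
Local Notation vec := 'cV[R]_n.

Definition simplex : set vec :=
  [set x | (forall i, 0 <= x i 0) /\ \sum_i x i 0 = 1].

Definition dotv (s v : vec) : R := \sum_i s i 0 * v i 0.

Definition supp_fun (S : set vec) (v : vec) : R := sup [set dotv s v | s in S].

Definition xinorm (xi : vec) (x : vec) : R := Num.sqrt (\sum_i xi i 0 * (x i 0) ^+ 2).

Definition ximin (xi : vec) : R := inf [set xi i 0 | i in [set: 'I_n]].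

Definition stochastic (P : 'M[R]_n) : Prop :=
  (forall i j, 0 <= P i j) /\ (forall i, \sum_j P i j = 1).

Definition stationary (P : 'M[R]_n) (xi : vec) : Prop :=
  simplex xi /\ (forall j, \sum_i xi i 0 * P i j = xi j 0).

Variable A : finType.

Definition proxy_set (p : 'I_n -> A -> vec) (Uhat : 'I_n -> A -> set vec)
  (i : 'I_n) (a : A) : set vec := [set p i a + y | y in Uhat i a].

Definition proxy_bellman (c : 'I_n -> A -> R) (vt : R) (pi : 'I_n -> A)
  (p : 'I_n -> A -> vec) (Uhat : 'I_n -> A -> set vec) (v : vec) : vec :=
  \col_i (c i (pi i) + vt * supp_fun (proxy_set p Uhat i (pi i)) v).

Definition beta_ia (xi : vec) (U Uhat : 'I_n -> A -> set vec) (i : 'I_n) (a : A) : R :=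
  sup [set inf [set xinorm xi (y - x) | x in U i a] | y in Uhat i a] / ximin xi.

(* beta = max_i beta^{pi(i)}_i  (all beta^a_i are >= 0) *)
Definition beta (xi : vec) (U Uhat : 'I_n -> A -> set vec) (pi : 'I_n -> A) : R :=
  \big[Num.max/0]_i beta_ia xi U Uhat i (pi i).

End Defs.
Arguments simplex {R n} _.
Arguments supp_fun {R n} _ _.

From HB Require Import structures.
From mathcomp Require Import all_boot all_order all_algebra.
From mathcomp Require Import all_classical all_reals all_analysis.
From mathcomp Require Import ring lra.
Import Order.TTheory GRing.Theory Num.Theory.
Import numFieldNormedType.Exports.
Local Open Scope classical_set_scope.
Local Open Scope ring_scope.

(* Write w = v - v'.  A proxy vector p + y splits as (p + x) + (y - x) with x in U
   close to y.  The probability vector p + x is dominated by (alpha / vt) times the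
   exploration row, so it contributes at most alpha (P|w|)_i; the weighted
   Cauchy-Schwarz inequality bounds |(y - x)^T w| by ||y - x||_xi ||w||_xi / xi_min,
   hence by beta ||w||_xi after optimising x.  As
   |sigma_S(v) - sigma_S(v')| <= sup_{s in S} |s^T w|, this gives
   |(T v - T v')_i| <= alpha (P|w|)_i + vt beta ||w||_xi.  Finally
   ||P|w| ||_xi <= ||w||_xi by Jensen's inequality and the stationarity of xi,
   and (a + b)^2 <= 2 a^2 + 2 b^2. *)

Lemma sqr_le_of_norm (R : realDomainType) (x y : R) : `|x| <= y -> x ^+ 2 <= y ^+ 2.
Proof.
move=> xy; rewrite -real_normK ?num_real //.
by apply: lerXn2r; rewrite ?nnegrE ?(le_trans _ xy) ?normr_ge0.
Qed.

Section WeightedSums.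
Context {R : realFieldType} {n : nat} {w : 'I_n -> R}.
Hypothesis w_ge0 : forall j, 0 <= w j.

Lemma wsum_sqr_ge0 (u : 'I_n -> R) : 0 <= \sum_j w j * u j ^+ 2.
Proof. by apply: sumr_ge0 => j _; rewrite mulr_ge0 ?sqr_ge0. Qed.

Lemma weighted_cauchy_schwarz (u v : 'I_n -> R) :
  (\sum_j w j * u j * v j) ^+ 2 <= (\sum_j w j * u j ^+ 2) * (\sum_j w j * v j ^+ 2).
Proof.
set A := \sum_j w j * u j ^+ 2; set B := \sum_j w j * v j ^+ 2.
set C := \sum_j w j * u j * v j.
have [A0 | A_neq0] := eqVneq A 0.
  have wu0 j : w j * u j = 0.
    move/eqP: A0; rewrite psumr_eq0 => [/allP/(_ j (mem_index_enum _))|i _].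
      by rewrite mulf_eq0 sqrf_eq0 => /orP[]/eqP->; rewrite ?mul0r ?mulr0.
    by rewrite mulr_ge0 ?sqr_ge0.
  have -> : C = 0 by rewrite /C big1 // => j _; rewrite wu0 mul0r.
  by rewrite A0 mul0r expr2 mul0r.
have A_gt0 : 0 < A by rewrite lt_def A_neq0 wsum_sqr_ge0.
have : 0 <= \sum_j w j * (A * v j - C * u j) ^+ 2 by exact: wsum_sqr_ge0.
have -> : \sum_j w j * (A * v j - C * u j) ^+ 2 = A * (A * B - C ^+ 2).
  rewrite (eq_bigr (fun j => A ^+ 2 * (w j * v j ^+ 2)
    - (2 * A * C) * (w j * u j * v j) + C ^+ 2 * (w j * u j ^+ 2))); last first.
    by move=> j _; ring.
  by rewrite big_split /= sumrB -!mulr_sumr -/A -/B -/C; ring.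
by rewrite pmulr_rge0 // subr_ge0 mulrC.
Qed.

Lemma sqr_wmean_le (u : 'I_n -> R) : \sum_j w j = 1 ->
  (\sum_j w j * u j) ^+ 2 <= \sum_j w j * u j ^+ 2.
Proof.
move=> w1; have := weighted_cauchy_schwarz u (fun=> 1).
have -> : \sum_j w j * u j * 1 = \sum_j w j * u j.
  by apply: eq_bigr => j _; rewrite mulr1.
have -> : \sum_j w j * 1 ^+ 2 = 1.
  by rewrite -[RHS]w1; apply: eq_bigr => j _; rewrite expr1n mulr1.
by rewrite mulr1.
Qed.

End WeightedSums.

Section XiNorm.
Context {R : realType} {n : nat} {xi : 'cV[R]_n}.
Hypothesis xi_ge0 : forall j, 0 <= xi j 0.
Implicit Types z w : 'cV[R]_n.

Lemma xinorm_ge0 z : 0 <= xinorm xi z.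
Proof. exact: sqrtr_ge0. Qed.

Lemma xinorm_sqr z : xinorm xi z ^+ 2 = \sum_j xi j 0 * z j 0 ^+ 2.
Proof. by rewrite sqr_sqrtr // (wsum_sqr_ge0 xi_ge0). Qed.

Lemma xinorm_le z z' : (forall j, `|z j 0| <= z' j 0) -> xinorm xi z <= xinorm xi z'.
Proof.
move=> zz'; apply: ler_wsqrtr; apply: ler_sum => j _.
by rewrite ler_wpM2l // sqr_le_of_norm.
Qed.

Lemma xinorm_normr z : xinorm xi (map_mx Num.norm z) = xinorm xi z.
Proof.
by congr Num.sqrt; apply: eq_bigr => j _; rewrite mxE real_normK ?num_real.
Qed.

Lemma xinormZ a z : xinorm xi (a *: z) = `|a| * xinorm xi z.
Proof.
rewrite -sqrtr_sqr -sqrtrM ?sqr_ge0 // mulr_sumr; congr Num.sqrt.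
by apply: eq_bigr => j _; rewrite mxE; ring.
Qed.

Lemma xinorm_sqrD_le z z' :
  xinorm xi (z + z') ^+ 2 <= 2 * xinorm xi z ^+ 2 + 2 * xinorm xi z' ^+ 2.
Proof.
rewrite !xinorm_sqr !mulr_sumr -big_split /=; apply: ler_sum => j _.
rewrite mxE -subr_ge0.
have -> : 2 * (xi j 0 * z j 0 ^+ 2) + 2 * (xi j 0 * z' j 0 ^+ 2)
          - xi j 0 * (z j 0 + z' j 0) ^+ 2 = xi j 0 * (z j 0 - z' j 0) ^+ 2 by ring.
by rewrite mulr_ge0 ?sqr_ge0.
Qed.

Lemma xinorm_cst1 : \sum_j xi j 0 = 1 -> xinorm xi (const_mx 1) = 1.
Proof.
move=> xi1; rewrite /xinorm (eq_bigr (fun j => xi j 0)) ?xi1 ?sqrtr1 // => j _.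
by rewrite mxE expr1n mulr1.
Qed.

Lemma dotv_le_xinorm (m : R) z w : 0 < m -> (forall j, m <= xi j 0) ->
  `|dotv z w| <= xinorm xi z * xinorm xi w / m.
Proof.
move=> m_gt0 m_le.
have xi_gt0 j : 0 < xi j 0 by exact: lt_le_trans (m_le j).
have -> : dotv z w = \sum_j xi j 0 * (z j 0 / xi j 0) * w j 0.
  by apply: eq_bigr => j _; field; rewrite gt_eqF.
have zxi_le : \sum_j xi j 0 * (z j 0 / xi j 0) ^+ 2 <= (xinorm xi z / m) ^+ 2.
  rewrite expr_div_n xinorm_sqr mulr_suml; apply: ler_sum => j _.
  have -> : xi j 0 * (z j 0 / xi j 0) ^+ 2 = z j 0 ^+ 2 / xi j 0.
    by field; rewrite gt_eqF.
  rewrite ler_pdivrMr // mulrAC ler_pdivlMr ?exprn_gt0 //.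
  have -> : xi j 0 * z j 0 ^+ 2 * xi j 0 = z j 0 ^+ 2 * xi j 0 ^+ 2 by ring.
  rewrite ler_wpM2l ?sqr_ge0 //; apply: lerXn2r;
    by rewrite ?nnegrE ?(ltW m_gt0) ?(ltW (xi_gt0 j)) ?m_le.
rewrite -(ger0_norm (_ : 0 <= xinorm xi z * xinorm xi w / m)); last first.
  by rewrite divr_ge0 ?mulr_ge0 ?xinorm_ge0 ?ltW.
rewrite -ler_sqr ?nnegrE ?normr_ge0 // !real_normK ?num_real //.
apply: (le_trans (weighted_cauchy_schwarz (fun j => ltW (xi_gt0 j)) _ _)).
rewrite -xinorm_sqr mulrAC exprMn ler_wpM2r ?sqr_ge0 //.
Qed.

Lemma xinorm_stationary (P : 'M[R]_n) z : stochastic P -> stationary P xi ->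
  xinorm xi (P *m z) <= xinorm xi z.
Proof.
move=> [P_ge0 P1] [_ xiP]; apply: ler_wsqrtr.
apply: (@le_trans _ _ (\sum_i xi i 0 * \sum_j P i j * z j 0 ^+ 2)).
  apply: ler_sum => i _; rewrite mxE ler_wpM2l //.
  exact: sqr_wmean_le.
under eq_bigr do rewrite mulr_sumr.
rewrite exchange_big /=; apply: ler_sum => j _.
by rewrite -xiP mulr_suml; under eq_bigr do rewrite mulrA.
Qed.

Lemma ximin_le j : ximin xi <= xi j 0.
Proof. by apply: ge_inf; [exists 0 => _ [k _ <-] | exists j]. Qed.

Lemma ximin_gt0 (i0 : 'I_n) : (forall j, 0 < xi j 0) -> 0 < ximin xi.
Proof.
move=> xi_gt0; have [j0 _ j0_min] := arg_minP (fun j => xi j 0) (isT : predT i0).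
apply: (lt_le_trans (xi_gt0 j0)); apply: lb_le_inf; first by exists (xi i0 0), i0.
by move=> _ [j _ <-]; exact: j0_min.
Qed.

End XiNorm.

Lemma xinorm_gt0 {R : realType} {n : nat} {xi : 'cV[R]_n} z :
  (forall j, 0 < xi j 0) -> z != 0 -> 0 < xinorm xi z.
Proof.
move=> xi_gt0; apply: contraNT; rewrite -leNgt => z_le0.
have /eqP : xinorm xi z ^+ 2 = 0 by apply/eqP; rewrite sqrf_eq0 eq_le z_le0 xinorm_ge0.
rewrite xinorm_sqr => [|j]; last exact: ltW.
rewrite psumr_eq0 => [/allP z0|j _]; last by rewrite mulr_ge0 ?sqr_ge0 ?ltW.
apply/eqP/matrixP => j k; rewrite ord1 mxE.
move: (z0 j (mem_index_enum _)) => /=.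
by rewrite mulf_eq0 sqrf_eq0 gt_eqF //= => /eqP.
Qed.

Lemma le_affine_inf (R : realType) (E : set R) (a c K : R) :
  E !=set0 -> 0 <= c -> (forall e, E e -> K <= a + c * e) -> K <= a + c * inf E.
Proof.
move=> [e0 Ee0]; rewrite le_eqVlt => /predU1P[<- | c_gt0] KE.
  by rewrite mul0r; have := KE e0 Ee0; rewrite mul0r.
rewrite -lerBlDl mulrC -ler_pdivrMr //; apply: lb_le_inf; first by exists e0.
by move=> e Ee; rewrite ler_pdivrMr // mulrC lerBlDl KE.
Qed.

Lemma compact_mx_entry_bounded {R : realType} {m k : nat} {S : set 'M[R]_(m, k)} :
  compact S -> exists M : R, forall y, S y -> forall i j, `|y i j| <= M.
Proof.
move=> /compact_bounded[M [_ S_le]]; exists (M + 1) => y Sy i j.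
have M_lt : M < M + 1 by rewrite ltrDl.
have /= := S_le (M + 1) M_lt y Sy; apply: le_trans.
rewrite -[X in _ <= X]/(mx_norm y) mx_normrE.
exact: (le_bigmax 0 (fun ij : 'I_m * 'I_k => `|y ij.1 ij.2|) (i, j)).
Qed.

Section Excess.
Context {R : realType} {n : nat} (xi : 'cV[R]_n).
Hypothesis xi_ge0 : forall j, 0 <= xi j 0.
Variables U V : set 'cV[R]_n.

(* The directed Hausdorff distance from V to U; [beta_ia xi U Uhat i a] unfolds to
   [excess xi (U i a) (Uhat i a) / ximin xi]. *)
Definition excess : R := sup [set inf [set xinorm xi (y - x) | x in U] | y in V].

Lemma inf_xinorm_le (y : 'cV[R]_n) {x : 'cV[R]_n} :
  U x -> inf [set xinorm xi (y - x) | x in U] <= xinorm xi (y - x).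
Proof.
by move=> Ux; apply: ge_inf; [exists 0 => _ [? _ <-]; exact: xinorm_ge0 | exists x].
Qed.

Hypotheses (U_neq0 : U !=set0) (V_compact : compact V).

Lemma inf_xinorm_le_excess y : V y -> inf [set xinorm xi (y - x) | x in U] <= excess.
Proof.
move=> Vy; apply: ub_le_sup; last by exists y.
have [M VM] := compact_mx_entry_bounded V_compact; have [x0 Ux0] := U_neq0.
exists (xinorm xi (\col_j (M + `|x0 j 0|))) => _ [y' Vy' <-].
apply: (le_trans (inf_xinorm_le y' Ux0)); apply: xinorm_le => // j.
by rewrite !mxE (le_trans (ler_normB _ _)) // lerD2r VM.
Qed.

End Excess.

Lemma dotvDl {R : realType} {n : nat} (a b w : 'cV[R]_n) :
  dotv (a + b) w = dotv a w + dotv b w.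
Proof. by rewrite /dotv -big_split; apply: eq_bigr => j _; rewrite mxE mulrDl. Qed.

Lemma dotvBr {R : realType} {n : nat} (s v v' : 'cV[R]_n) :
  dotv s (v - v') = dotv s v - dotv s v'.
Proof. by rewrite /dotv -sumrB; apply: eq_bigr => j _; rewrite !mxE mulrBr. Qed.

Section SupportFunction.
Context {R : realType} {n : nat} (S : set 'cV[R]_n).
Hypothesis S_neq0 : S !=set0.

Lemma supp_fun_le_add v v' K : has_ubound [set dotv s v' | s in S] ->
  (forall s, S s -> dotv s (v - v') <= K) -> supp_fun S v <= supp_fun S v' + K.
Proof.
move=> ub_v' le_K; have [s0 Ss0] := S_neq0.
apply: ge_sup; first by exists (dotv s0 v), s0.
move=> _ [s Ss <-]; have : dotv s v <= dotv s v' + K by rewrite -lerBlDl -dotvBr le_K.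
by move/le_trans; apply; rewrite lerD2r; apply: ub_le_sup => //; exists s.
Qed.

Lemma supp_funB_le v v' K :
  has_ubound [set dotv s v | s in S] -> has_ubound [set dotv s v' | s in S] ->
  (forall s, S s -> `|dotv s (v - v')| <= K) -> `|supp_fun S v - supp_fun S v'| <= K.
Proof.
move=> ub_v ub_v' le_K.
rewrite ler_norml lerNl opprB !lerBlDr !(addrC K); apply/andP; split.
  apply: supp_fun_le_add => // s Ss.
  have -> : dotv s (v' - v) = - dotv s (v - v') by rewrite !dotvBr opprB.
  by apply: le_trans (ler_norm _) _; rewrite normrN le_K.
by apply: supp_fun_le_add => // s Ss; apply: le_trans (ler_norm _) (le_K s Ss).
Qed.

End SupportFunction.

Section ProxyRow.
Context {R : realType} {n : nat}.
Variables (xi q : 'cV[R]_n) (U V : set 'cV[R]_n) (P : 'M[R]_n) (i : 'I_n) (alpha vt : R).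
Hypotheses (vt_gt0 : 0 < vt) (xi_gt0 : forall j, 0 < xi j 0).
Hypotheses (U_neq0 : U !=set0) (V_neq0 : V !=set0) (V_compact : compact V).
Hypothesis U_simplex : [set q + x | x in U] `<=` simplex.
Hypothesis U_dominated :
  forall j s, [set q + x | x in U] s -> vt * s j 0 <= alpha * P i j.

Let xi_ge0 j : 0 <= xi j 0 := ltW (xi_gt0 j).
Let xi_min_gt0 : 0 < ximin xi := ximin_gt0 i xi_gt0.

Lemma dotv_nominal_le x w : U x ->
  vt * `|dotv (q + x) w| <= alpha * (P *m map_mx Num.norm w) i 0.
Proof.
move=> Ux; have [s_ge0 _] : simplex (q + x) by apply: U_simplex; exists x.
rewrite mxE mulr_sumr; apply: le_trans (ler_wpM2l (ltW vt_gt0) (ler_norm_sum _ _ _)) _.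
rewrite mulr_sumr; apply: ler_sum => j _.
rewrite normrM (ger0_norm (s_ge0 j)) [in X in _ <= X]mxE !mulrA ler_wpM2r ?normr_ge0 //.
by apply: U_dominated; exists x.
Qed.

Lemma dotv_proxy_le_xinorm x y w : U x ->
  vt * `|dotv (q + y) w| <= alpha * (P *m map_mx Num.norm w) i 0
                            + vt * xinorm xi w / ximin xi * xinorm xi (y - x).
Proof.
move=> Ux; have -> : q + y = (q + x) + (y - x) by rewrite -addrA [x + _]addrC subrK.
rewrite dotvDl; apply: le_trans (ler_wpM2l (ltW vt_gt0) (ler_normD _ _)) _.
rewrite mulrDr lerD ?dotv_nominal_le //.
have -> : vt * xinorm xi w / ximin xi * xinorm xi (y - x)
          = vt * (xinorm xi (y - x) * xinorm xi w / ximin xi) by ring.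
by rewrite ler_wpM2l ?(ltW vt_gt0) // dotv_le_xinorm // => j; exact: ximin_le.
Qed.

Lemma dotv_proxy_le y w : V y ->
  vt * `|dotv (q + y) w| <= alpha * (P *m map_mx Num.norm w) i 0
                            + vt * (excess xi U V / ximin xi) * xinorm xi w.
Proof.
move=> Vy; set c := vt * xinorm xi w / ximin xi.
have c_ge0 : 0 <= c by rewrite divr_ge0 ?mulr_ge0 ?xinorm_ge0 ?ltW.
apply: le_trans (_ : _ <= alpha * (P *m map_mx Num.norm w) i 0
                          + c * inf [set xinorm xi (y - x) | x in U]) _.
  apply: le_affine_inf => //.
    by have [x Ux] := U_neq0; exists (xinorm xi (y - x)), x.
  by move=> _ [x Ux <-]; exact: dotv_proxy_le_xinorm.
rewrite lerD2l (_ : _ * _ * _ = c * excess xi U V); last first.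
  by rewrite /c; field; rewrite gt_eqF.
by rewrite ler_wpM2l // inf_xinorm_le_excess.
Qed.

Lemma supp_fun_proxyB_le v v' :
  vt * `|supp_fun [set q + y | y in V] v - supp_fun [set q + y | y in V] v'|
  <= alpha * (P *m map_mx Num.norm (v - v')) i 0
     + vt * (excess xi U V / ximin xi) * xinorm xi (v - v').
Proof.
set K := fun w => (alpha * (P *m map_mx Num.norm w) i 0
                   + vt * (excess xi U V / ximin xi) * xinorm xi w) / vt.
have le_K w s : [set q + y | y in V] s -> `|dotv s w| <= K w.
  by move=> [y Vy <-]; rewrite ler_pdivlMr // mulrC dotv_proxy_le.
have ub w : has_ubound [set dotv s w | s in [set q + y | y in V]].
  by exists (K w) => _ [s Ss <-]; apply: le_trans (ler_norm _) (le_K w s Ss).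
rewrite -ler_pdivlMl // mulrC; apply: supp_funB_le => //; last exact: le_K.
by have [y Vy] := V_neq0; exists (q + y), y.
Qed.

End ProxyRow.

Section ProxyBellman.
Context {R : realType} {n : nat} {A : finType}.
Context {c : 'I_n -> A -> R} {vt : R} {policy : 'I_n -> A} {p : 'I_n -> A -> 'cV[R]_n}.
Context {U Uhat : 'I_n -> A -> set 'cV[R]_n} {Pexp : 'M[R]_n} {xi : 'cV[R]_n} {alpha : R}.
Hypotheses (vt_gt0 : 0 < vt) (xi_gt0 : forall j, 0 < xi j 0).
Hypotheses (U_neq0 : forall i a, U i a !=set0) (Uhat_neq0 : forall i a, Uhat i a !=set0).
Hypothesis Uhat_compact : forall i a, compact (Uhat i a).
Hypothesis U_simplex : forall i a, [set p i a + x | x in U i a] `<=` simplex.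
Hypothesis U_dominated :
  forall i j a q, [set p i a + x | x in U i a] q -> vt * q j 0 <= alpha * Pexp i j.
Hypotheses (Pexp_stochastic : stochastic Pexp) (xi_stationary : stationary Pexp xi).

Local Notation T := (proxy_bellman c vt policy p Uhat).
Let xi_ge0 j : 0 <= xi j 0 := ltW (xi_gt0 j).

Lemma proxy_bellmanB_le v v' i :
  `|(T v - T v') i 0| <= alpha * (Pexp *m map_mx Num.norm (v - v')) i 0
                         + vt * beta_ia xi U Uhat i (policy i) * xinorm xi (v - v').
Proof.
have -> : (T v - T v') i 0 = vt * (supp_fun (proxy_set p Uhat i (policy i)) v
                                    - supp_fun (proxy_set p Uhat i (policy i)) v').
  by rewrite !mxE; ring.
rewrite normrM (gtr0_norm vt_gt0).
apply: supp_fun_proxyB_le => //.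
by [exact: U_neq0 | exact: Uhat_neq0 | exact: Uhat_compact | exact: U_simplex
   | move=> j q; exact: U_dominated].
Qed.

Lemma xinorm_mulmx_normr_le w : xinorm xi (Pexp *m map_mx Num.norm w) <= xinorm xi w.
Proof. by rewrite -[leRHS]xinorm_normr xinorm_stationary. Qed.

Lemma proxy_bellman_lipschitz_sqr v v' (b : R) :
  (forall i, beta_ia xi U Uhat i (policy i) <= b) ->
  xinorm xi (T v - T v') ^+ 2
  <= 2 * (alpha ^+ 2 + vt ^+ 2 * b ^+ 2) * xinorm xi (v - v') ^+ 2.
Proof.
move=> beta_le; set w := v - v'.
have T_le : xinorm xi (T v - T v')
    <= xinorm xi (alpha *: (Pexp *m map_mx Num.norm w)
                  + (vt * b * xinorm xi w) *: const_mx 1).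
  apply: xinorm_le => // i; apply: le_trans (proxy_bellmanB_le v v' i) _.
  by rewrite !mxE mulr1 lerD2l ler_wpM2r ?xinorm_ge0 // ler_wpM2l ?(ltW vt_gt0) ?beta_le.
apply: le_trans (lerXn2r 2 _ _ T_le) _; rewrite ?nnegrE ?xinorm_ge0 //.
apply: le_trans (xinorm_sqrD_le xi_ge0 _ _) _.
have [_ xi1] := xi_stationary.1.
rewrite !xinormZ xinorm_cst1 // mulr1 !exprMn !real_normK ?num_real //.
have : xinorm xi (Pexp *m map_mx Num.norm w) ^+ 2 <= xinorm xi w ^+ 2.
  by apply: lerXn2r; rewrite ?nnegrE ?xinorm_ge0 ?xinorm_mulmx_normr_le.
have := sqr_ge0 alpha; nra.
Qed.

Hypothesis alpha_ge0 : 0 <= alpha.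

Lemma proxy_bellman_lipschitz v v' : (forall i, beta_ia xi U Uhat i (policy i) = 0) ->
  xinorm xi (T v - T v') <= alpha * xinorm xi (v - v').
Proof.
move=> beta0; set z : 'cV[R]_n := Pexp *m map_mx Num.norm (v - v').
apply: le_trans (_ : _ <= xinorm xi (alpha *: z)) _.
  apply: xinorm_le => // i; apply: le_trans (proxy_bellmanB_le v v' i) _.
  by rewrite beta0 mulr0 mul0r addr0 [leRHS]mxE.
by rewrite xinormZ ger0_norm // ler_wpM2l // xinorm_mulmx_normr_le.
Qed.

End ProxyBellman.

Theorem theorem4 (R : realType) (n d : nat) (A : finType)
  (c : 'I_n -> A -> R) (vt : R) (pi : 'I_n -> A)
  (p : 'I_n -> A -> 'cV[R]_n) (U Uhat : 'I_n -> A -> set 'cV[R]_n)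
  (Pexp : 'M[R]_n) (xi : 'cV[R]_n) (Phi : 'M[R]_(n, d)) (alpha : R) :
  0 < vt < 1 ->
  (forall i a, simplex (p i a)) ->
  (forall i a, U i a !=set0 /\ compact (U i a)) ->
  (forall i a, [set p i a + x | x in U i a] `<=` simplex) ->
  (forall i a, Uhat i a !=set0 /\ compact (Uhat i a) /\ U i a `<=` Uhat i a) ->
  stochastic Pexp -> stationary Pexp xi -> (forall i, 0 < xi i 0) ->
  0 < alpha < 1 ->
  (forall i j a q, [set p i a + x | x in U i a] q -> vt * q j 0 <= alpha * Pexp i j) ->
  alpha ^+ 2 + vt ^+ 2 * (beta xi U Uhat pi) ^+ 2 < 2^-1 ->
  (forall theta theta' : 'cV[R]_d,
     xinorm xi (proxy_bellman c vt pi p Uhat (Phi *m theta)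
                - proxy_bellman c vt pi p Uhat (Phi *m theta')) ^+ 2
     <= 2 * (alpha ^+ 2 + vt ^+ 2 * (beta xi U Uhat pi) ^+ 2)
          * xinorm xi (Phi *m theta - Phi *m theta') ^+ 2
   /\ (Phi *m theta != Phi *m theta' ->
       2 * (alpha ^+ 2 + vt ^+ 2 * (beta xi U Uhat pi) ^+ 2)
          * xinorm xi (Phi *m theta - Phi *m theta') ^+ 2
       < xinorm xi (Phi *m theta - Phi *m theta') ^+ 2))
  /\ ((forall i, beta_ia xi U Uhat i (pi i) = 0) ->
      forall theta theta' : 'cV[R]_d,
        xinorm xi (proxy_bellman c vt pi p Uhat (Phi *m theta)
                   - proxy_bellman c vt pi p Uhat (Phi *m theta'))
        <= alpha * xinorm xi (Phi *m theta - Phi *m theta')).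
Proof.
move=> /andP[vt_gt0 _] _ U_ne U_simplex Uhat_ne P_sto xi_stat xi_gt0 /andP[alpha_gt0 _]
  U_dominated k_lt.
have U_neq0 i a : U i a !=set0 := (U_ne i a).1.
have Uhat_neq0 i a : Uhat i a !=set0 := (Uhat_ne i a).1.
have Uhat_compact i a : compact (Uhat i a) := (Uhat_ne i a).2.1.
split=> [th th' | beta0 th th']; last first.
  exact: (proxy_bellman_lipschitz vt_gt0 xi_gt0 U_neq0 Uhat_neq0 Uhat_compact
            U_simplex U_dominated P_sto xi_stat (ltW alpha_gt0)).
split.
  apply: (proxy_bellman_lipschitz_sqr vt_gt0 xi_gt0 U_neq0 Uhat_neq0 Uhat_compact
            U_simplex U_dominated P_sto xi_stat) => i.
  exact: (le_bigmax 0 (fun i => beta_ia xi U Uhat i (pi i))).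
rewrite -subr_eq0 => w_neq0; rewrite -[ltRHS]mul1r ltr_pM2r; first lra.
by rewrite exprn_gt0 // xinorm_gt0.
Qed.
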